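(* Let $A=(a_{ik})$ be a real symmetric $n\times n$ matrix whose induced signed graph $\Gamma=(T,\sigma)$, $T=(V,E)$, has no cycle. Let $\lambda$ be an eigenvalue of $A$ with multiplicity $r$ and let $f:V\to\mathbb R$ be an eigenfunction for $\lambda$. Let $\mathcal F=\{x\in V: f(x)=0\text{ and }f(y)=0\text{ for all }y\sim x\}$, and let $\tilde r$ be the multiplicity of $\lambda$ as an eigenvalue of the matrix $\widetilde A$ obtained from $A$ by deleting all rows and columns with indices in $\mathcal F$. Then $$r\ge\tilde r=e_0-2z+c+|\mathcal F|,$$ where $z=|\{x\in V: f(x)=0\}|$, $e_0=|\{\{x,y\}\in E: f(x)=0\text{ or }f(y)=0\}|$, and $c$ is the number of connected components of $T$.
   Context: The induced signed graph of a real symmetric $n\times n$ matrix $A$ has vertex set $V=\{x_1,\dots,x_n\}$ (identified with indices), edge $\{x_i,x_j\}$ iff $i\ne j$ and $a_{ij}\ne0$, and sign $-a_{ij}/|a_{ij}|$. Eigenfunctions are nonzero eigenvectors viewed as functions on $V$; $y\sim x$ means $\{x,y\}\in E$. *)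

From HB Require Import structures.
From mathcomp Require Import all_boot all_order all_algebra.
Set Implicit Arguments. Unset Strict Implicit. Unset Printing Implicit Defensive.
Import Order.TTheory GRing.Theory Num.Theory.
Local Open Scope ring_scope.

(* Underlying (unsigned) graph T of the induced signed graph of A:
   vertices 'I_n, edge {i,j} iff i != j and A i j != 0. *)
Definition mx_adj (R : ringType) (n : nat) (A : 'M[R]_n) : rel 'I_n :=
  fun i j => (i != j) && (A i j != 0).

Definition mx_acyclic (R : ringType) (n : nat) (A : 'M[R]_n) : Prop :=
  forall s : seq 'I_n, uniq s -> (3 <= size s)%N -> ~~ cycle (mx_adj A) s.

Definition eig_mult (R : fieldType) (m : nat) (B : 'M[R]_m) (lam : R) : nat :=
  mup lam (char_poly B).

Definition zero_nbhd_set (R : ringType) (n : nat) (A : 'M[R]_n) (f : 'cV[R]_n)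
  : {set 'I_n} :=
  [set x | (f x 0 == 0) && [forall y, mx_adj A x y ==> (f y 0 == 0)]].

Definition del_rowcol (R : ringType) (n : nat) (A : 'M[R]_n) (S : {set 'I_n})
  : 'M[R]_#|~: S| :=
  \matrix_(i, j) A (enum_val i) (enum_val j).

Definition zero_count (R : ringType) (n : nat) (f : 'cV[R]_n) : nat :=
  #|[set x | f x 0 == 0]|.

Definition zero_edge_count (R : ringType) (n : nat) (A : 'M[R]_n) (f : 'cV[R]_n)
  : nat :=
  #|[set p : 'I_n * 'I_n | [&& (p.1 < p.2)%N, mx_adj A p.1 p.2 &
                                (f p.1 0 == 0) || (f p.2 0 == 0)]]|.

Definition comp_count (R : ringType) (n : nat) (A : 'M[R]_n) : nat :=
  n_comp (mx_adj A) predT.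

From HB Require Import structures.
From mathcomp Require Import all_boot all_order all_algebra zify ring.
Import Order.TTheory GRing.Theory Num.Theory.
Local Open Scope ring_scope.
Set Implicit Arguments. Unset Strict Implicit. Unset Printing Implicit Defensive.

(* Put B = A - lam and g = f^T, so that g B = 0.  As B is real symmetric, the
   multiplicity of lam in a principal submatrix B[S] is the nullity of B[S].
   Split the vertices into the support N of f, the set Z of zeros of f with a
   neighbour in N, and F.  If N is contained in S and x in S n Z has the
   neighbour y in N, the restriction of g to the component of y in T[S - x] is
   a null vector of B[S - x] whose product with the column of x is
   g_y B_yx <> 0, because y is the only neighbour of x in that component (T has
   no cycle); so deleting x raises the nullity by one (Parter).  Hence
   rt = null B[N u Z] = null B[N] - |Z| and
   r = null B[N u F u Z] = null B[N u F] - |Z| >= null B[N] - |Z|, since F has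
   no neighbour in N.  For h in the null space of B[N], the flow
   B_uv (h_u g_v - g_u h_v) is a circulation on a forest, hence zero: h / g is
   constant on the components of T[N], and null B[N] = |N| - |E(N)|.  The
   formula follows from |E| = |E(N)| + e_0 and c = n - |E|. *)

Section CharPoly.
Variable R : fieldType.

Lemma char_poly_conj m (P B : 'M[R]_m) : P \in unitmx ->
  char_poly (P *m B *m invmx P) = char_poly B.
Proof.
move=> uP; set P' := map_mx polyC P; set Q' := map_mx polyC (invmx P).
have PQ : P' *m Q' = 1%:M by rewrite -map_mxM mulmxV // map_mx1.
have QP : Q' *m P' = 1%:M by rewrite -map_mxM mulVmx // map_mx1.
rewrite /char_poly; have -> : char_poly_mx (P *m B *m invmx P) = P' *m char_poly_mx B *m Q'.
  rewrite /char_poly_mx !map_mxM mulmxBr mulmxBl -/P' -/Q'.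
  by rewrite scalar_mxC -mulmxA; congr (_ - _); rewrite -mulmxA PQ mulmx1.
by rewrite !det_mulmx mulrC mulrA -det_mulmx QP det1 mul1r.
Qed.

Lemma mup_char_poly_block d e a (C : 'M[R]_e) : ~~ eigenvalue C a ->
  mup a (char_poly (block_mx (a%:M : 'M_d) 0 0 C)) = d.
Proof.
move=> Ca; rewrite /char_poly char_block_diag_mx det_ublock.
rewrite -/(char_poly (a%:M : 'M_d)) -/(char_poly C) char_poly_trig ?scalar_mx_is_trig //.
under eq_bigr => i _ do rewrite mxE eqxx mulr1n.
rewrite prodr_const card_ord mupM ?expf_neq0 ?polyXsubC_eq0 ?monic_neq0 ?char_poly_monic //.
by rewrite mup_XsubCX eqxx mupNroot ?addn0 // -eigenvalue_root_char.
Qed.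

End CharPoly.

Section SymmetricMultiplicity.
Variable R : realFieldType.

Lemma capmx_kermx_sym m (N : 'M[R]_m) : N^T = N -> (kermx N :&: N = 0)%MS.
Proof.
move=> NT; apply/eqP; rewrite -submx0; apply/rV_subP => x.
rewrite sub_capmx sub_kermx => /andP[/eqP xN0 /submxP[y xE]].
have xx0 : \sum_i x 0 i ^+ 2 = 0.
  have -> : \sum_i x 0 i ^+ 2 = (x *m x^T) 0 0.
    by rewrite mxE; apply: eq_bigr => i _; rewrite mxE expr2.
  by rewrite {2}xE trmx_mul NT mulmxA xN0 mul0mx mxE.
rewrite submx0; apply/eqP/rowP => i; rewrite mxE; apply/eqP; rewrite -sqrf_eq0.
by apply/eqP/(psumr_eq0P (P := xpredT) _ xx0) => // j _; rewrite sqr_ge0.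
Qed.

(* Kernel and image of the symmetric [N := B - a] are complementary, so [N] is
   similar to [block_mx 0 0 0 C] with [C] invertible. *)
Lemma mup_char_poly_sym d e (B : 'M[R]_(d + e)) a : B^T = B ->
  \rank (kermx (B - a%:M)) = d -> mup a (char_poly B) = d.
Proof.
move=> BT rkK; set N := B - a%:M.
have NT : N^T = N by rewrite /N linearB /= BT tr_scalar_mx.
have rkN : \rank N = e by have := mxrank_ker N; have := rank_leq_row N; rewrite rkK; lia.
set K : 'M_(d, d + e) := castmx (rkK, erefl) (row_base (kermx N)).
set W : 'M_(e, d + e) := castmx (rkN, erefl) (row_base N).
have eK : (K :=: kermx N)%MS := eqmx_trans (eqmx_cast _ _) (eq_row_base _).
have eW : (W :=: N)%MS := eqmx_trans (eqmx_cast _ _) (eq_row_base _).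
have KN : K *m N = 0 by apply/eqP; rewrite -sub_kermx eK.
set C := W *m N *m pinvmx W.
have CW : C *m W = W *m N by rewrite mulmxKpV // eW submxMl.
set P := col_mx K W.
have uP : P \in unitmx.
  rewrite -row_free_unit /row_free -addsmxE.
  have := mxrank_sum_cap K W; rewrite (cap_eqmx eK eW) capmx_kermx_sym //.
  by rewrite mxrank0 eK eW rkK rkN addn0 => ->.
have PBP : P *m B *m invmx P = block_mx (a%:M : 'M_d) 0 0 (C + a%:M).
  have PN : P *m N = block_mx 0 0 0 C *m P.
    by rewrite mul_col_mx mul_block_col KN CW !mul0mx !add0r.
  rewrite -[B](subrK (a%:M)) -/N mulmxDr PN mul_mx_scalar -mul_scalar_mx.
  by rewrite -mulmxDl mulmxK // (scalar_mx_block d e a) add_block_mx !addr0 add0r.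
rewrite -(char_poly_conj B uP) PBP mup_char_poly_block // /eigenvalue negbK.
rewrite -submx0; apply/rV_subP => v; rewrite sub_kermx addrK => /eqP vC.
have : (v *m W <= kermx N :&: N)%MS.
  by rewrite sub_capmx sub_kermx -mulmxA -CW mulmxA vC mul0mx eqxx -eW submxMl.
by rewrite capmx_kermx_sym // submx0 mulmx_free_eq0 ?submx0 // /row_free eW rkN.
Qed.

Lemma eig_mult_sym m (B : 'M[R]_m) a : B^T = B ->
  eig_mult B a = \rank (kermx (B - a%:M)).
Proof.
move=> BT; set d := \rank _; have rkK : \rank (kermx (B - a%:M)) = d by [].
have /subnKC mE : (d <= m)%N by apply: rank_leq_row.
clearbody d; rewrite /eig_mult; move: B BT rkK; rewrite -mE.
by move=> B BT; apply: mup_char_poly_sym.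
Qed.

End SymmetricMultiplicity.

Section SelectionMatrix.
Variables (R : fieldType) (n : nat) (S : {set 'I_n}).

Definition selmx : 'M[R]_(#|S|, n) := rowsub enum_val 1%:M.

Lemma mul_selmx m (B : 'M[R]_(n, m)) : selmx *m B = rowsub enum_val B.
Proof. by rewrite mul_rowsub_mx mul1mx. Qed.

Lemma mul_tr_selmx m (v : 'M[R]_(m, n)) : v *m selmx^T = colsub enum_val v.
Proof. by rewrite trmx_mxsub trmx1 mulmx_colsub mulmx1. Qed.

Lemma selmx_mid (B : 'M[R]_n) : selmx *m B *m selmx^T = mxsub enum_val enum_val B.
Proof. by rewrite mul_selmx mul_tr_selmx -mxsubcr. Qed.

Lemma row_free_selmx : row_free selmx.
Proof.
apply/row_freeP; exists selmx^T; rewrite mul_tr_selmx.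
apply/matrixP => k l; rewrite !mxE (inj_eq enum_val_inj).
by case: (k == l).
Qed.

Lemma rank_selmx : \rank selmx = #|S|.
Proof. exact/eqP/row_free_selmx. Qed.

Lemma colsub_eq0P (v : 'rV[R]_n) :
  reflect (forall u, u \in S -> v 0 u = 0) (colsub enum_val v == 0 :> 'rV_#|S|).
Proof.
apply: (iffP eqP) => [/rowP v0 u uS|v0].
  by have := v0 (enum_rank_in uS u); rewrite !mxE enum_rankK_in.
by apply/rowP => k; rewrite !mxE v0 ?enum_valP.
Qed.

Lemma sub_selmxP (h : 'rV[R]_n) :
  reflect (forall i, i \notin S -> h 0 i = 0) (h <= selmx)%MS.
Proof.
apply: (iffP idP) => [/submxP[D ->] i iS|h0].
  rewrite mxE big1 // => k _; rewrite !mxE.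
  by case: eqP => [ki|]; [have := enum_valP k; rewrite ki (negbTE iS) | rewrite mulr0].
apply/submxP; exists (colsub enum_val h); apply/rowP => i.
rewrite mxE (eq_bigr (fun k => h 0 (enum_val k) * (enum_val k == i)%:R)); last first.
  by move=> k _; rewrite !mxE.
rewrite -(big_enum_val (A := mem S) (fun x => h 0 x * (x == i)%:R)) /=.
case: (boolP (i \in S)) => iS.
  rewrite (bigD1 i) //= eqxx mulr1 big1 ?addr0 // => x /andP[_ /negbTE ->].
  by rewrite mulr0.
rewrite h0 // big1 // => x xS.
by case: eqP => [xi|]; [rewrite -xi xS in iS | rewrite mulr0].
Qed.

End SelectionMatrix.

Arguments selmx {R n} S.

Section PrincipalKernel.
Variables (R : fieldType) (n : nat) (B : 'M[R]_n).

(* The null space of the principal submatrix [B[S]], as vectors supported on [S]. *)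
Definition subker (S : {set 'I_n}) := (selmx S :&: kermx (B *m (selmx S)^T))%MS.

Lemma subkerP (S : {set 'I_n}) (h : 'rV[R]_n) :
  reflect ((forall i, i \notin S -> h 0 i = 0) /\
           (forall u, u \in S -> (h *m B) 0 u = 0))
          (h <= subker S)%MS.
Proof.
rewrite sub_capmx sub_kermx mulmxA mul_tr_selmx.
by apply: (iffP andP) => -[/sub_selmxP h0 /colsub_eq0P hB].
Qed.

Lemma rank_subker (S : {set 'I_n}) :
  \rank (subker S) = \rank (kermx (mxsub enum_val enum_val B : 'M_#|S|)).
Proof.
rewrite /subker -(mxrankMfree _ (row_free_selmx R S)); apply/eqmx_rank/andP; split.
  apply/rV_subP => h; rewrite sub_capmx sub_kermx => /andP[/submxP[D ->] hB].
  by apply: submxMr; rewrite sub_kermx -selmx_mid !mulmxA; rewrite !mulmxA in hB.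
rewrite sub_capmx submxMl sub_kermx -selmx_mid /=.
by rewrite -mulmxA (mulmxA (selmx S)) mulmx_ker.
Qed.

Lemma subkerT : (subker setT :=: kermx B)%MS.
Proof.
apply/eqmxP/andP; split; apply/rV_subP => h.
  case/subkerP => _ hB; rewrite sub_kermx; apply/eqP/rowP => u.
  by rewrite hB ?in_setT // mxE.
rewrite sub_kermx => /eqP hB; apply/subkerP; split => [i|u _].
  by rewrite in_setT.
by rewrite hB mxE.
Qed.

Lemma subkerS (S1 S2 : {set 'I_n}) : S1 \subset S2 ->
  (forall u v, u \in S2 :\: S1 -> v \in S1 -> B v u = 0) ->
  (subker S1 <= subker S2)%MS.
Proof.
move=> sS12 B0; apply/rV_subP => h /subkerP[h0 hB]; apply/subkerP; split.
  by move=> i iS2; apply: h0; apply: contra iS2; apply: (subsetP sS12).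
move=> u uS2; have [uS1|uS1] := boolP (u \in S1); first exact: hB.
rewrite mxE big1 // => v _; have [vS1|vS1] := boolP (v \in S1).
  by rewrite B0 ?mulr0 // inE uS1.
by rewrite h0 ?mul0r.
Qed.

Hypothesis Bsym : B^T = B.

(* By symmetry [h B w^T = w B h^T]; the left side is [0] and the right side
   is [h x * (w B) x]. *)
Lemma subker_eq0_at (S : {set 'I_n}) x (w : 'rV[R]_n) : x \in S ->
  (w <= subker (S :\ x))%MS -> (w *m B) 0 x != 0 ->
  forall h : 'rV[R]_n, (h <= subker S)%MS -> h 0 x = 0.
Proof.
move=> xS /subkerP[w0 wB] wBx h /subkerP[h0 hB].
have : (h *m B *m w^T) 0 0 = (w *m B *m h^T) 0 0.
  have -> : w *m B *m h^T = (h *m B *m w^T)^T.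
    by rewrite !trmx_mul trmxK Bsym mulmxA.
  by rewrite [RHS]mxE.
rewrite !mxE big1 => [|i _]; last first.
  rewrite [w^T _ _]mxE; have [iS|iS] := boolP (i \in S); first by rewrite hB ?mul0r.
  by rewrite w0 ?mulr0 // !inE (negbTE iS) andbF.
rewrite (bigD1 x) //= big1 => [|i ix]; last first.
  rewrite [h^T _ _]mxE; have [iS|iS] := boolP (i \in S); last by rewrite h0 ?mulr0.
  by rewrite wB ?mul0r // !inE ix.
by rewrite [h^T _ _]mxE addr0 => /esym/eqP; rewrite mulf_eq0 (negbTE wBx) => /eqP.
Qed.

(* Parter's rule: [w] witnesses that [x] is a Parter vertex of [B] on [S]. *)
Lemma rank_subkerD1 (S : {set 'I_n}) x (w : 'rV[R]_n) : x \in S ->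
  (w <= subker (S :\ x))%MS -> (w *m B) 0 x != 0 ->
  \rank (subker (S :\ x)) = (\rank (subker S)).+1.
Proof.
move=> xS wK wBx; pose ex : 'cV[R]_n := delta_mx x 0.
have colB (v : 'rV[R]_n) : (v *m (B *m ex)) 0 0 = (v *m B) 0 x.
  by rewrite mulmxA -colE mxE.
have -> : (subker S :=: subker (S :\ x) :&: kermx (B *m ex))%MS.
  apply/eqmxP/andP; split; apply/rV_subP => h.
    move=> hK; have hx0 := subker_eq0_at xS wK wBx hK.
    case/subkerP: hK => h0 hB; rewrite sub_capmx sub_kermx; apply/andP; split.
      apply/subkerP; split => [i|u /setD1P[_ /hB] //].
      by rewrite !inE negb_and negbK => /orP[/eqP ->|/h0].
    by apply/eqP/rowP => i; rewrite ord1 colB hB // mxE.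
  rewrite sub_capmx sub_kermx => /andP[/subkerP[h0 hB] /eqP hx].
  apply/subkerP; split => [i iS|u uS]; first by rewrite h0 // !inE (negbTE iS) andbF.
  have [->|ux] := eqVneq u x; last by rewrite hB // !inE ux.
  by rewrite -colB hx mxE.
have := mxrank_mul_ker (subker (S :\ x)) (B *m ex).
suff -> : \rank (subker (S :\ x) *m (B *m ex)) = 1%N by rewrite add1n.
apply/eqP; rewrite eqn_leq rank_leq_col lt0n mxrank_eq0 /=.
apply: contraNneq wBx => K0; case/submxP: wK => D ->.
by rewrite -colB -mulmxA K0 mulmx0 mxE.
Qed.

End PrincipalKernel.

Section Cycles.
Variables (T : finType) (e : rel T).

(* Walk along a simple path, always leaving by an edge other than the one we
   arrived on, until the walk hits the path again. *)
Lemma uniq_cycle_exists : symmetric e -> irreflexive e ->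
  (forall u v, e u v -> exists2 w, w != v & e u w) ->
  forall u v, e u v -> exists s, [/\ uniq s, (3 <= size s)%N & cycle e s].
Proof.
move=> e_sym e_irr e_nbr u v euv.
suff walk k l q p : (#|T| - size p < k)%N -> uniq [:: l, q & p] -> path e l (q :: p) ->
    exists s, [/\ uniq s, (3 <= size s)%N & cycle e s].
  apply: (walk #|T|.+1 u v [::]) => /=; rewrite ?subn0 ?euv //.
  by rewrite inE andbT; apply: contraTneq euv => ->; rewrite e_irr.
elim: k l q p => // k IH l q p lt_k uniq_p /= /andP[elq path_p].
have [w wq elw] := e_nbr l q elq.
have [wIn|wNin] := boolP (w \in [:: l, q & p]).
  have wp : w \in p.
    move: wIn; rewrite !inE (negbTE wq) /= => /orP[/eqP wl|//].
    by move: elw; rewrite wl e_irr.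
  case/splitPr: wp uniq_p path_p => p1 p2 uniq_p path_p.
  exists [:: l, q & rcons p1 w]; split; rewrite /= ?size_rcons //.
    by move: uniq_p; rewrite -cat_rcons -cat_cons -cat_cons cat_uniq => /and3P[].
  rewrite elq rcons_path last_rcons e_sym elw andbT.
  by move: path_p; rewrite -cat_rcons cat_path => /andP[].
have := max_card (mem [:: w, l, q & p]).
rewrite (card_uniqP _) /= ?wNin // => le_T.
apply: (IH w l (q :: p)); first by move: lt_k le_T => /=; lia.
  by rewrite cons_uniq wNin uniq_p.
by rewrite /= e_sym elw elq path_p.
Qed.

End Cycles.

Section Circulation.
Variables (T : finType) (e : rel T).
Hypothesis e_acyclic : forall s, uniq s -> (3 <= size s)%N -> ~~ cycle e s.

Lemma circulation_eq0 (R : numDomainType) (phi : T -> T -> R) :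
  (forall u v, phi u v = - phi v u) -> (forall u v, phi u v != 0 -> e u v) ->
  (forall u, \sum_v phi u v = 0) -> forall u v, phi u v = 0.
Proof.
move=> phiN phi_e phi_div u v; apply/eqP/negP => /negP phi_uv.
pose H : rel T := fun a b => phi a b != 0.
have H_sym : symmetric H by move=> a b; rewrite /H phiN oppr_eq0.
have H_irr : irreflexive H by move=> a; apply/negbTE/negPn; rewrite -eqNr -phiN.
have H_nbr a b : H a b -> exists2 c, c != b & H a c.
  move=> Hab; have [/existsP[c /andP[cb Hac]]|/existsPn Hn] := boolP [exists c, (c != b) && H a c].
    by exists c.
  move: Hab; rewrite /H; have := phi_div a.
  rewrite (bigD1 b) //= big1 ?addr0 => [->|c cb]; first by rewrite eqxx.
  by have := Hn c; rewrite cb /= negbK => /eqP.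
have [s [uniq_s size_s cycle_s]] := uniq_cycle_exists H_sym H_irr H_nbr phi_uv.
by move: (e_acyclic uniq_s size_s); rewrite (sub_cycle phi_e cycle_s).
Qed.

Lemma all_path_in (S : {pred T}) a p :
  a \in S -> path [rel u v in S | e u v] a p -> all [in S] (a :: p).
Proof.
elim: p a => [|b p IH] a /= aS; first by rewrite aS.
by case/andP=> /andP[/andP[_ bS] _] /(IH b bS) /= ->; rewrite aS.
Qed.

Lemma acyclic_nbr_connect_eq (S : {pred T}) x y z : x \notin S -> y \in S ->
  e x y -> e z x -> connect [rel u v in S | e u v] y z -> z = y.
Proof.
move=> xS yS exy ezx /connectP[p path_p zE]; apply/eqP/negPn/negP => zy.
case/shortenP: path_p zE => p' path_p' uniq_p' _ zE.
have p'S : all [in S] (y :: p') := all_path_in yS path_p'.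
have size_p : (3 <= size [:: x, y & p'])%N.
  by case: p' {path_p' uniq_p' p'S} zE zy => //= ->; rewrite eqxx.
have uniq_p : uniq [:: x, y & p'].
  by rewrite cons_uniq uniq_p' andbT; apply: contra xS => /(allP p'S).
move: (e_acyclic uniq_p size_p); rewrite /cycle rcons_cons /= exy rcons_path -zE ezx !andbT.
by rewrite (sub_path _ path_p') // => u v /andP[].
Qed.

End Circulation.

Section Incidence.
Variables (R : numFieldType) (n : nat) (e : rel 'I_n).
Hypothesis e_sym : symmetric e.

Definition edges_in (S : {set 'I_n}) :=
  [set p : 'I_n * 'I_n | [&& (p.1 < p.2)%N, e p.1 p.2, p.1 \in S & p.2 \in S]].

Definition incmx (S : {set 'I_n}) : 'M[R]_(n, #|edges_in S|) :=
  \matrix_(i, k) ((i == (enum_val k).1)%:R - (i == (enum_val k).2)%:R).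

Definition cst_on (S : {set 'I_n}) := (selmx S :&: kermx (incmx S))%MS.

Lemma mul_incmx (S : {set 'I_n}) (h : 'rV[R]_n) k :
  (h *m incmx S) 0 k = h 0 (enum_val k).1 - h 0 (enum_val k).2.
Proof.
rewrite mxE; under eq_bigr => i _ do rewrite mxE mulrBr.
have delta a : \sum_i h 0 i * (i == a)%:R = h 0 a.
  by rewrite (bigD1 a) //= eqxx mulr1 big1 ?addr0 // => i /negbTE ->; rewrite mulr0.
by rewrite sumrB !delta.
Qed.

Lemma cst_onP (S : {set 'I_n}) (h : 'rV[R]_n) :
  reflect ((forall i, i \notin S -> h 0 i = 0) /\
           {in S &, forall u v, e u v -> h 0 u = h 0 v})
          (h <= cst_on S)%MS.
Proof.
rewrite sub_capmx sub_kermx; apply: (iffP andP) => -[/sub_selmxP h0 hI]; split => //.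
  have h_edge (u v : 'I_n) : (u < v)%N -> u \in S -> v \in S -> e u v -> h 0 u = h 0 v.
    move=> lt_uv uS vS euv; have uvE : (u, v) \in edges_in S by rewrite inE lt_uv euv uS.
    move/eqP/rowP: hI => /(_ (enum_rank_in uvE (u, v))).
    by rewrite mul_incmx enum_rankK_in // mxE => /eqP; rewrite subr_eq0 => /eqP.
  move=> u v uS vS euv; have [lt_uv|lt_vu|/val_inj-> //] := ltngtP u v.
    exact: h_edge.
  by apply/esym/h_edge; rewrite // e_sym.
apply/eqP/rowP => k; rewrite mul_incmx mxE.
by have := enum_valP k; rewrite inE => /and4P[_ ek k1 k2]; rewrite (hI _ _ k1 k2 ek) subrr.
Qed.

Lemma cst_onT_connect (h : 'rV[R]_n) : (h <= cst_on setT)%MS ->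
  forall x y, connect e x y -> h 0 x = h 0 y.
Proof.
case/cst_onP => _ h_e x _ /connectP[p + ->]; elim: p x => //= a p IH x /andP[xa pa].
by rewrite (h_e x a) ?in_setT // IH.
Qed.

Lemma n_comp_rank : n_comp e predT = \rank (cst_on setT).
Proof.
set C := [set x | roots e x].
have -> : n_comp e predT = #|C| by apply: eq_card => x; rewrite !inE andbT.
pose compmx : 'M[R]_(#|C|, n) := \matrix_(k, i) (fingraph.root e i == enum_val k)%:R.
have rootC (k : 'I_#|C|) : fingraph.root e (enum_val k) = enum_val k.
  by have := enum_valP k; rewrite inE => /eqP.
have compmx_free : row_free compmx.
  apply/row_freeP; exists (selmx C)^T; rewrite mul_tr_selmx.
  by apply/matrixP => k l; rewrite !mxE rootC (inj_eq enum_val_inj) eq_sym.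
rewrite -(eqP compmx_free); apply/eqmx_rank/andP; split.
  apply/row_subP => k; apply/cst_onP; split => [i|u v _ _ euv]; first by rewrite in_setT.
  by rewrite !mxE (fingraph.rootP (sym_connect_sym e_sym) (connect1 euv)).
apply/rV_subP => h hC; apply/submxP; exists (colsub enum_val h); apply/rowP => i.
set ri := fingraph.root e i.
rewrite mxE (eq_bigr (fun k => h 0 (enum_val k) * (ri == enum_val k)%:R)); last first.
  by move=> k _; rewrite !mxE.
rewrite -(big_enum_val (A := mem C) (fun x => h 0 x * (ri == x)%:R)) /=.
rewrite (bigD1 ri) /=; last by rewrite inE (roots_root (sym_connect_sym e_sym)).
rewrite eqxx mulr1 big1 ?addr0.
  by apply: (cst_onT_connect hC); apply: connect_root.
by move=> x /andP[_ /negbTE]; rewrite eq_sym => ->; rewrite mulr0.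
Qed.

Hypothesis e_acyclic : forall s, uniq s -> (3 <= size s)%N -> ~~ cycle e s.

Lemma sum_eq_pair1 (p : 'I_n * 'I_n) a : \sum_b ((p == (a, b))%:R : R) = (p.1 == a)%:R.
Proof.
case: p => p1 p2 /=; have [->|ne] := eqVneq p1 a; last first.
  by rewrite big1 // => b _; rewrite xpair_eqE (negbTE ne).
rewrite (bigD1 p2) //= !eqxx big1 ?addr0 // => b bp.
by rewrite xpair_eqE eqxx eq_sym (negbTE bp).
Qed.

Lemma sum_eq_pair2 (p : 'I_n * 'I_n) a : \sum_b ((p == (b, a))%:R : R) = (p.2 == a)%:R.
Proof.
case: p => p1 p2 /=; have [->|ne] := eqVneq p2 a; last first.
  by rewrite big1 // => b _; rewrite xpair_eqE (negbTE ne) andbF.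
rewrite (bigD1 p1) //= !eqxx big1 ?addr0 // => b bp.
by rewrite xpair_eqE eq_sym (negbTE bp).
Qed.

(* A vector on the edges killed by the transposed incidence matrix is a
   circulation, hence zero on a forest. *)
Lemma tr_incmx_free (S : {set 'I_n}) : row_free (incmx S)^T.
Proof.
rewrite -kermx_eq0 -submx0; apply/rV_subP => c; rewrite sub_kermx submx0 => /eqP cI.
pose phi a b := \sum_k c 0 k * ((enum_val k == (a, b))%:R - (enum_val k == (b, a))%:R).
have phiN a b : phi a b = - phi b a.
  by rewrite -sumrN; apply: eq_bigr => k _; rewrite -mulrN opprB.
have phi_e a b : phi a b != 0 -> e a b.
  apply: contraNT => eab; apply/eqP/big1 => k _.
  have := enum_valP k; rewrite inE => /and4P[_ ek _ _].
  have [kE|] := eqVneq (enum_val k) (a, b); first by rewrite kE in ek; rewrite ek in eab.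
  have [kE|] := eqVneq (enum_val k) (b, a); last by rewrite subrr mulr0.
  by rewrite kE e_sym in ek; rewrite ek in eab.
have phi_div a : \sum_b phi a b = 0.
  transitivity ((c *m (incmx S)^T) 0 a); last by rewrite cI mxE.
  rewrite exchange_big mxE; apply: eq_bigr => k _.
  by rewrite -mulr_sumr sumrB sum_eq_pair1 sum_eq_pair2 !mxE !(eq_sym a).
apply/eqP/rowP => k; rewrite mxE.
have := circulation_eq0 e_acyclic phiN phi_e phi_div (enum_val k).1 (enum_val k).2.
rewrite /phi (bigD1 k) //= big1 => [|l lk].
  rewrite -surjective_pairing eqxx; have := enum_valP k; rewrite inE.
  case: (enum_val k) => p1 p2 /= /andP[lt_p _]; rewrite xpair_eqE.
  by case: eqP => [p21|]; [rewrite p21 ltnn in lt_p | rewrite subr0 mulr1 addr0].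
have [kl|] := eqVneq (enum_val l) (enum_val k); first by rewrite (enum_val_inj kl) eqxx in lk.
rewrite -surjective_pairing => /negbTE ->; have := enum_valP l; have := enum_valP k.
rewrite !inE; case: (enum_val k) (enum_val l) => [k1 k2] [l1 l2] /= /andP[lt_k _] /andP[lt_l _].
rewrite xpair_eqE; case: eqP => [lk2|]; last by rewrite subrr mulr0.
by case: eqP => [lk1|]; [move: lt_l; rewrite lk1 lk2 ltnNge (ltnW lt_k) | rewrite subrr mulr0].
Qed.

Lemma rank_selmx_incmx (S : {set 'I_n}) : \rank (selmx S *m incmx S) = #|edges_in S|.
Proof.
rewrite -mxrank_tr; apply/eqP; rewrite -/(row_free _) -kermx_eq0 -submx0; apply/rV_subP => c.
rewrite sub_kermx submx0 trmx_mul mulmxA mul_tr_selmx => /colsub_eq0P cI0.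
rewrite -(mulmx_free_eq0 _ (tr_incmx_free S)); apply/eqP/rowP => a.
rewrite [RHS]mxE; have [/cI0 //|aS] := boolP (a \in S).
rewrite mxE big1 // => k _; have := enum_valP k; rewrite inE => /and4P[_ _ k1 k2].
rewrite !mxE; do 2![case: eqP => [ak|]; first by rewrite -ak (negbTE aS) in k1 k2].
by rewrite subrr mulr0.
Qed.

Lemma rank_cst_on (S : {set 'I_n}) : (\rank (cst_on S) + #|edges_in S|)%N = #|S|.
Proof.
by have := mxrank_mul_ker (selmx S) (incmx S); rewrite rank_selmx rank_selmx_incmx addnC.
Qed.

End Incidence.

(* The statement does not involve a field; [rat] serves for the linear algebra. *)
Lemma forest_card n (e : rel 'I_n) : symmetric e ->
  (forall s, uniq s -> (3 <= size s)%N -> ~~ cycle e s) ->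
  (n_comp e predT + #|edges_in e setT|)%N = n.
Proof.
by move=> e_sym e_acyclic; rewrite (n_comp_rank rat e_sym) rank_cst_on // cardsT card_ord.
Qed.

Lemma mx_symE (T : Type) n (A : 'M[T]_n) : A^T = A -> forall i j, A i j = A j i.
Proof. by move=> AT i j; rewrite -[in LHS]AT mxE. Qed.

Section AcyclicKernel.
Variables (R : numFieldType) (n : nat) (B : 'M[R]_n) (e : rel 'I_n).
Hypothesis Bsym : B^T = B.
Hypothesis eE : forall i j, e i j = (i != j) && (B i j != 0).
Hypothesis e_acyclic : forall s, uniq s -> (3 <= size s)%N -> ~~ cycle e s.
Variable g : 'rV[R]_n.
Hypothesis gB : g *m B = 0.

Let Bsym_ij := mx_symE Bsym.

Let e_sym : symmetric e.
Proof. by move=> i j; rewrite !eE eq_sym Bsym_ij. Qed.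

Let gB_col u : \sum_i g 0 i * B i u = 0.
Proof. by move/rowP: gB => /(_ u); rewrite !mxE. Qed.

Definition supp := [set i | g 0 i != 0].

Definition border := [set x | (g 0 x == 0) && [exists y, e x y && (g 0 y != 0)]].

Lemma subkerD1_witness (S : {set 'I_n}) x y : supp \subset S -> x \in S ->
  e x y -> g 0 x = 0 -> g 0 y != 0 ->
  exists2 w : 'rV[R]_n, (w <= subker B (S :\ x))%MS & (w *m B) 0 x != 0.
Proof.
move=> suppS xS exy gx0 gy0; set S' := S :\ x.
have B_e i j : i != j -> B i j != 0 -> e i j by rewrite eE => -> ->.
have Bxy : B x y != 0 by move: exy; rewrite eE => /andP[].
have inS' i : g 0 i != 0 -> i \in S'.
  move=> gi; rewrite !inE (subsetP suppS) ?inE // andbT.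
  by apply: contraNneq gi => ->; rewrite gx0.
set C := [set v | connect [rel u v in S' | e u v] y v].
have yC : y \in C by rewrite inE connect0.
have CS' v : v \in C -> v \in S'.
  rewrite inE => /connectP[p /(all_path_in (inS' _ gy0)) /allP p_S' ->].
  exact/p_S'/mem_last.
have C_closed u v : u \in C -> v \in S' -> e u v -> v \in C.
  rewrite [v \in C]inE => uC vS' euv; apply: (connect_trans (y := u)).
    by rewrite inE in uC.
  by apply: connect1; rewrite /= euv vS' CS'.
exists (\row_i (if i \in C then g 0 i else 0)).
  apply/subkerP; split => [i iS'|u uS'].
    by rewrite mxE; case: ifP => // /CS'; rewrite (negbTE iS').
  rewrite mxE; have [uC|uC] := boolP (u \in C).
    rewrite -[RHS](gB_col u); apply: eq_bigr => i _; rewrite mxE; case: ifP => // /negbT iC.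
    have [->|gi] := eqVneq (g 0 i) 0; first by rewrite mul0r.
    have [->|Biu] := eqVneq (B i u) 0; first by rewrite !mulr0.
    have ui : u != i by apply: contraNneq iC => <-.
    by rewrite (C_closed u i) ?inS' ?B_e // Bsym_ij in iC.
  rewrite big1 // => i _; rewrite mxE; case: ifP => iC; last by rewrite mul0r.
  have [->|Biu] := eqVneq (B i u) 0; first by rewrite mulr0.
  have iu : i != u by apply: contraNneq uC => <-.
  by rewrite (C_closed i u) ?B_e in uC.
rewrite mxE (bigD1 y) //= mxE yC big1 => [|i iy]; first by rewrite addr0 mulf_neq0 // Bsym_ij.
rewrite mxE; case: ifP => iC; last by rewrite mul0r.
have [->|Bix] := eqVneq (B i x) 0; first by rewrite mulr0.
have ix : i != x by apply: contraTneq (CS' i iC) => ->; rewrite !inE eqxx.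
have xS' : x \notin S' by rewrite !inE eqxx.
by rewrite (acyclic_nbr_connect_eq e_acyclic xS' (CS' y yC) exy (B_e i x ix Bix)) ?eqxx in iy;
  move: iC; rewrite inE.
Qed.

Lemma rank_subker_border (S T : {set 'I_n}) : supp \subset S ->
  T \subset border -> [disjoint T & S] ->
  \rank (subker B S) = (\rank (subker B (S :|: T)) + #|T|)%N.
Proof.
move=> suppS; have [k] := ubnP #|T|; elim: k T => // k IH T ltTk Tb TS.
have [->|[x xT]] := set_0Vmem T; first by rewrite setU0 cards0 addn0.
have xS : x \notin S by rewrite (disjointFr TS xT).
have := subsetP Tb x xT; rewrite inE => /andP[/eqP gx0 /existsP[y /andP[exy gy0]]].
have xST : x \in S :|: T by rewrite inE xT orbT.
have suppST : supp \subset S :|: T := subset_trans suppS (subsetUl S T).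
have [w wK wBx] := subkerD1_witness suppST xST exy gx0 gy0.
have STx : (S :|: T) :\ x = S :|: T :\ x.
  by apply/setP => i; rewrite !inE; case: eqP => // ->; rewrite (negbTE xS).
have cardT : #|T| = #|T :\ x|.+1 by rewrite (cardsD1 x T) xT.
rewrite (IH (T :\ x)) -?STx ?(rank_subkerD1 Bsym xST wK wBx) ?cardT ?addnS //.
- by rewrite -ltnS -cardT.
- exact: subset_trans (subD1set T x) Tb.
- by apply: disjointWl TS; apply: subD1set.
Qed.

(* [B u v * (h u * g v - g u * h v)] is a circulation on the forest. *)
Lemma subker_supp_cross (h : 'rV[R]_n) : (h <= subker B supp)%MS ->
  forall u v, e u v -> h 0 u * g 0 v = g 0 u * h 0 v.
Proof.
case/subkerP => h0 hB; pose phi u v := B u v * (h 0 u * g 0 v - g 0 u * h 0 v).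
have phiN u v : phi u v = - phi v u by rewrite /phi Bsym_ij; ring.
have phi_e u v : phi u v != 0 -> e u v.
  rewrite eE mulf_eq0 negb_or => /andP[-> hg]; rewrite andbT.
  by apply: contraNneq hg => ->; rewrite mulrC subrr.
have phi_div u : \sum_v phi u v = 0.
  have -> : \sum_v phi u v = h 0 u * \sum_v g 0 v * B v u - g 0 u * (h *m B) 0 u.
    rewrite mxE !mulr_sumr -sumrB; apply: eq_bigr => v _; rewrite /phi Bsym_ij; ring.
  rewrite gB_col mulr0 sub0r; have [uS|] := boolP (u \in supp); first by rewrite hB ?mulr0 ?oppr0.
  by rewrite inE negbK => /eqP ->; rewrite mul0r oppr0.
move=> u v euv; have /eqP := circulation_eq0 e_acyclic phiN phi_e phi_div u v.
rewrite mulf_eq0 subr_eq0 => /orP[|/eqP //].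
by move: euv; rewrite eE => /andP[_ /negbTE ->].
Qed.

Let gd i := if g 0 i != 0 then g 0 i else 1.

Let gd_neq0 i : gd i != 0.
Proof. by rewrite /gd; case: ifP => // _; apply: oner_neq0. Qed.

Let gdE i : i \in supp -> gd i = g 0 i.
Proof. by rewrite inE /gd => ->. Qed.

Lemma subker_supp_scale : (subker B supp :=: @cst_on R n e supp *m diag_mx (\row_i gd i))%MS.
Proof.
apply/eqmxP/andP; split; apply/rV_subP => h.
  move=> hK; have hE : h = \row_i (h 0 i / gd i) *m diag_mx (\row_i gd i).
    by apply/rowP => i; rewrite mul_mx_diag !mxE divfK ?gd_neq0.
  rewrite hE submxMr //; case/subkerP: (hK) => h0 _.
  apply/(cst_onP e_sym); split=> [i iS|u v uS vS euv].
    by rewrite mxE h0 ?mul0r.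
  rewrite !mxE !gdE //; move: uS vS; rewrite !inE => gu gv.
  by apply/eqP; rewrite eqr_div // (subker_supp_cross hK euv) mulrC.
case/submxP => D ->; rewrite mulmxA; move: (submxMl D (@cst_on R n e supp)).
move: (D *m _) => v /(cst_onP e_sym)[v0 v_e]; apply/subkerP; split => [i iS|u uS].
  by rewrite mul_mx_diag mxE v0 ?mul0r.
transitivity (v 0 u * \sum_b g 0 b * B b u); last by rewrite gB_col mulr0.
rewrite mxE mulr_sumr; apply: eq_bigr => b _; rewrite mul_mx_diag !mxE.
have [bS|bS] := boolP (b \in supp); last first.
  by move: (bS); rewrite inE negbK => /eqP ->; rewrite v0 // !(mul0r, mulr0).
rewrite gdE //; have [->|bu] := eqVneq b u; first by rewrite mulrA.
have [->|Bbu] := eqVneq (B b u) 0; first by rewrite !mulr0.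
by rewrite (v_e b u) ?eE ?bu ?Bbu // mulrA.
Qed.

Lemma rank_subker_supp : (\rank (subker B supp) + #|edges_in e supp|)%N = #|supp|.
Proof.
rewrite subker_supp_scale mxrankMfree ?row_free_unit ?unitmx_diag; last first.
  by rewrite unitmxE det_diag unitfE; apply/prodf_neq0 => i _; rewrite mxE.
exact: rank_cst_on e_sym e_acyclic supp.
Qed.

End AcyclicKernel.

Lemma mx_adj_subr_scalar (R : nzRingType) n (A : 'M[R]_n) a i j :
  mx_adj A i j = (i != j) && ((A - a%:M) i j != 0).
Proof. by rewrite /mx_adj !mxE; case: eqP => //= _; rewrite subr0. Qed.

Lemma mx_adj_sym (R : nzRingType) n (A : 'M[R]_n) : A^T = A -> symmetric (mx_adj A).
Proof. by move=> AT i j; rewrite /mx_adj eq_sym (mx_symE AT). Qed.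

Section EigenFunction.
Variables (R : realFieldType) (n : nat) (A : 'M[R]_n) (lam : R) (f : 'cV[R]_n).
Hypotheses (AT : A^T = A) (A_acyclic : mx_acyclic A) (Af : A *m f = lam *: f).
Local Notation B := (A - lam%:M).
Local Notation e := (mx_adj A).
Local Notation F := (zero_nbhd_set A f).
Local Notation supp := (supp f^T).
Local Notation border := (border e f^T).

Let BT : B^T = B.
Proof. by rewrite linearB /= AT tr_scalar_mx. Qed.

Let eE := @mx_adj_subr_scalar R n A lam.

Let gB : f^T *m B = 0.
Proof. by rewrite -[B]BT -trmx_mul mulmxBl Af mul_scalar_mx subrr trmx0. Qed.

Lemma zero_nbhd_setE : F = ~: (supp :|: border).
Proof.
apply/setP => x; rewrite !inE negb_or [f^T 0 x]mxE negbK.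
case: eqP => //= _; rewrite negb_exists; apply: eq_forallb => y.
by rewrite mxE negb_and negbK implybE.
Qed.

Lemma eig_mult_del_rowcol_border :
  (eig_mult (del_rowcol A F) lam + #|border|)%N = \rank (subker B supp).
Proof.
have delT : (del_rowcol A F)^T = del_rowcol A F.
  by apply/matrixP => k l; rewrite !mxE -{1}[A]AT mxE.
rewrite eig_mult_sym //; have -> : del_rowcol A F - lam%:M = mxsub enum_val enum_val B.
  by apply/matrixP => k l; rewrite !mxE (inj_eq enum_val_inj).
rewrite -rank_subker zero_nbhd_setE setCK.
rewrite (rank_subker_border BT eE A_acyclic gB (S := supp) (T := border)) ?subxx //.
by rewrite -setI_eq0 setIC; apply/eqP/setP => x; rewrite !inE; case: eqP.
Qed.

Lemma eig_mult_border :
  (eig_mult A lam + #|border|)%N = \rank (subker B (supp :|: F)).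
Proof.
rewrite (rank_subker_border BT eE A_acyclic gB (T := border)) ?subsetUl ?subxx //; last first.
  rewrite -setI_eq0 zero_nbhd_setE; apply/eqP/setP => x; rewrite !inE.
  by case: (_ == 0); case: [exists _, _].
rewrite eig_mult_sym // -subkerT; congr (\rank (subker B _) + _)%N.
apply/setP => x; rewrite zero_nbhd_setE in_setT !in_setU in_setC in_setU.
by case: (x \in supp); case: (x \in border).
Qed.

Lemma rank_subker_supp_leq :
  (\rank (subker B supp) <= \rank (subker B (supp :|: F)))%N.
Proof.
apply/mxrankS/subkerS => [|u v]; first exact: subsetUl.
move=> /setDP[+ uS] vS; rewrite in_setU (negbTE uS) /= inE => /andP[_ /forallP/(_ v)].
have uv : u != v by apply: contraNneq uS => ->.
move: vS; rewrite inE mxE => /negbTE fv.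
by rewrite eE uv (mx_symE BT) fv implybF negbK => /eqP.
Qed.

Lemma card_edges_setT :
  #|edges_in e setT| = (#|edges_in e supp| + zero_edge_count A f)%N.
Proof.
rewrite /zero_edge_count -(cardsID [set p : 'I_n * 'I_n | (p.1 \in supp) && (p.2 \in supp)]).
congr (_ + _)%N; apply: eq_card => -[x y]; rewrite !inE /= ?andbT ![f^T 0 _]mxE.
  by case: (_ < _)%N; case: (e x y).
by rewrite negb_and !negbK andbC andbA.
Qed.

Lemma zero_count_border : zero_count f = (#|border| + #|F|)%N.
Proof.
rewrite /zero_count -(cardsID border); congr (_ + _)%N; apply: eq_card => x.
  by rewrite !inE [f^T 0 x]mxE; case: (f x 0 == 0).
by rewrite zero_nbhd_setE !inE negb_or [f^T 0 x]mxE negbK andbC.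
Qed.

Lemma card_supp_zero_count : (#|supp| + zero_count f)%N = n.
Proof.
rewrite /zero_count; have <- : ~: supp = [set x | f x 0 == 0].
  by apply/setP => x; rewrite !inE mxE negbK.
by rewrite cardsC card_ord.
Qed.

Lemma rank_subker_supp_edges : (\rank (subker B supp) + #|edges_in e supp|)%N = #|supp|.
Proof. by have := rank_subker_supp BT eE A_acyclic gB. Qed.

Lemma comp_count_edges : (comp_count A + #|edges_in e setT|)%N = n.
Proof. exact: forest_card (mx_adj_sym AT) A_acyclic. Qed.

End EigenFunction.

Unset Implicit Arguments.

Theorem corollary5p4 (R : rcfType) (n : nat) (A : 'M[R]_n) (lam : R)
    (f : 'cV[R]_n) :
  A^T = A ->
  mx_acyclic A ->
  f != 0 -> A *m f = lam *: f ->
  let F := zero_nbhd_set A f in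
  let r := eig_mult A lam in
  let rt := eig_mult (del_rowcol A F) lam in
  (rt <= r)%N /\
  (rt%:Z = (zero_edge_count A f)%:Z - 2 * (zero_count f)%:Z
           + (comp_count A)%:Z + #|F|%:Z)%R.
Proof.
move=> AT A_acyclic _ Af F r rt.
have := eig_mult_del_rowcol_border AT A_acyclic Af.
have := eig_mult_border AT A_acyclic Af.
have := rank_subker_supp_leq lam f AT.
have := rank_subker_supp_edges AT A_acyclic Af.
have := comp_count_edges AT A_acyclic.
have := card_edges_setT A f; have := zero_count_border A f; have := card_supp_zero_count f.
(* [set] merges copies of the counts that differ only in the structure path
   from [rcfType], which [lia] would otherwise treat as distinct atoms. *)
rewrite -/F -/r -/rt; set z := zero_count f; set e0 := zero_edge_count A f.
set c := comp_count A; lia.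
Qed.
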